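(* Let $n\ge 2$, $C>0$, let $x\in\mathcal{K}_{S+}$, and let $\tilde{x}=x+\eta$ where either $\eta$ has i.i.d. Laplace entries with mean $0$ and scale $b>0$, or $\eta\sim\mathcal{N}(0,\sigma^2I_n)$ with $\sigma>0$. Then for every pair $(i,j)$ with $x_i\le x_j$, $$\mathcal{B}(\pi_{S+})_i-\mathcal{B}(\pi_{S+})_j\le x_j-x_i.$$
   Context: Let $C>0$, $\mathcal{K}_S=\{v\in\mathbb{R}^n:\sum_i v_i=C\}$, $\mathcal{K}_{S+}=\{v\in\mathcal{K}_S:v\ge0\}$, and $\pi_{S+}(\tilde{x})=\arg\min_{v\in\mathcal{K}_{S+}}\|v-\tilde{x}\|_2$. The bias of a map $\pi:\mathbb{R}^n\to\mathbb{R}^n$ is $\mathcal{B}(\pi)=\mathbb{E}_{\tilde{x}}[\pi(\tilde{x})]-x$. *)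

From HB Require Import structures.
From mathcomp Require Import all_boot all_order all_algebra.
From mathcomp Require Import all_classical all_reals all_analysis.
Set Implicit Arguments. Unset Strict Implicit. Unset Printing Implicit Defensive.
Import Order.TTheory GRing.Theory Num.Theory.
Local Open Scope classical_set_scope.
Local Open Scope ring_scope.

Section defs.
Variables (R : realType) (n : nat).

Definition simplex_pos (C : R) : set ('I_n -> R) :=
  [set v | \sum_(i < n) v i = C /\ (forall i, 0 <= v i)].

Definition dist2 (v y : 'I_n -> R) : R := Num.sqrt (\sum_(i < n) (v i - y i) ^+ 2).

Definition is_proj (C : R) (y v : 'I_n -> R) : Prop :=
  simplex_pos C v /\ (forall w, simplex_pos C w -> dist2 v y <= dist2 w y).

(* pi_{S+}(y) = argmin_{v in K_{S+}} ||v - y||_2 (the minimizer exists and is unique) *)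
Definition proj_simplex (C : R) (y : 'I_n -> R) : 'I_n -> R :=
  xget (fun _ => 0) (is_proj C y).

Definition laplace_pdf (b x : R) : R := (b *+ 2)^-1 * expR (- `|x| / b).
Definition laplace_prob (b : R) : set R -> \bar R :=
  fun V => (\int[lebesgue_measure]_(x in V) (laplace_pdf b x)%:E)%E.

Definition mutually_independent d (T : measurableType d) (P : probability T R)
  (eta : 'I_n -> T -> R) : Prop :=
  forall A : 'I_n -> set R, (forall i, measurable (A i)) ->
    P (\bigcap_(i in [set: 'I_n]) (eta i @^-1` A i)) =
    (\prod_(i < n) P (eta i @^-1` A i))%E.

Definition bias_proj d (T : measurableType d) (P : probability T R)
  (C : R) (x : 'I_n -> R) (eta : 'I_n -> T -> R) (k : 'I_n) : \bar R :=
  (\int[P]_w (proj_simplex C (fun i => x i + eta i w) k)%:E - (x k)%:E)%E.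

End defs.

From HB Require Import structures.
From mathcomp Require Import all_boot all_order all_algebra.
From mathcomp Require Import all_classical all_reals all_analysis.
From mathcomp Require Import ring lra perm measurable_realfun.
Set Implicit Arguments. Unset Strict Implicit. Unset Printing Implicit Defensive.
Import Order.TTheory GRing.Theory Num.Theory.
Import numFieldNormedType.Exports.
Local Open Scope classical_set_scope.
Local Open Scope ring_scope.

(* The projection onto {v >= 0 : sum_k v_k = C} is soft thresholding,
   v_k = max (y_k - tau, 0), where tau is the unique level at which the excess
   sum_k max (y_k - tau, 0) equals C.  It commutes with permutations of the
   coordinates, and it is monotone: raising y_i by delta while raising no
   coordinate by more than delta raises tau by at most delta, so v_i does not
   decrease.  I.i.d. noise is exchangeable, hence swapping coordinates i and j
   gives E[pi(x + eta)_j] = E[pi(x o (i j) + eta)_i] >= E[pi(x + eta)_i] when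
   x_i <= x_j; the bias difference is E[pi_i] - E[pi_j] + (x_j - x_i). *)

Section simplex_projection.
Variables (R : realType) (n : nat) (C : R).
Hypothesis C_gt0 : 0 < C.
Implicit Types (y w : 'I_n -> R) (s t : R).

Definition excess y t : R := \sum_(k < n) Num.max (y k - t) 0.

Lemma excess_nonincr y s t : s <= t -> excess y t <= excess y s.
Proof. by move=> st; apply: ler_sum => k _; rewrite le_max2 // lerB. Qed.

Lemma excess_decr y s t : s < t -> 0 < excess y t -> excess y t < excess y s.
Proof.
move=> st excess_gt0.
have [k ytk] : exists k, t < y k.
  apply: contrapT => none; move: excess_gt0; rewrite /excess big1 ?ltxx // => k _.
  by apply/max_idPr; rewrite subr_le0 leNgt; apply/negP => ytk; apply: none; exists k.
rewrite /excess (bigD1 k) //= [X in _ < X](bigD1 k) //=.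
apply: ltr_leD; last by apply: ler_sum => m _; rewrite le_max2 // lerB // ltW.
have ysk : s < y k := lt_trans st ytk.
by rewrite !max_l ?subr_ge0 ?ltW // ltrD2l ltrN2.
Qed.

Lemma continuous_excess y : continuous (excess y).
Proof.
have max0_cont k : continuous (fun t => Num.max (y k - t) 0).
  move=> t; apply: (@continuous_max _ _ (fun t => y k - t) (fun=> 0));
    last exact: cst_continuous.
  by apply: (@continuousB _ _ _ (fun=> y k) id); [exact: cst_continuous|exact: cvg_id].
rewrite /excess; elim: (index_enum _) => [|k r IHr].
  under eq_fun do rewrite big_nil; exact: cst_continuous.
under eq_fun do rewrite big_cons; move=> t; exact: continuousD (max0_cont k t) (IHr t).
Qed.

Lemma excess_eq_exists y (k0 : 'I_n) : exists t, excess y t = C.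
Proof.
pose M := \sum_k `|y k|.
have yM k : y k <= M.
  apply: le_trans (ler_norm (y k)) _.
  by rewrite /M (bigD1 k) //= ler_wpDr // sumr_ge0.
have excessM : excess y M = 0.
  by rewrite /excess big1 // => k _; apply/max_idPr; rewrite subr_le0.
have excess_low : C <= excess y (y k0 - C).
  rewrite /excess (bigD1 k0) //= (_ : y k0 - (y k0 - C) = C); last by ring.
  by rewrite (max_l (ltW C_gt0)) lerDl sumr_ge0 // => k _; rewrite le_max lexx orbT.
have lowM : y k0 - C <= M by rewrite (le_trans _ (yM k0)) // gerDl oppr_le0 ltW.
have C_between : Num.min (excess y (y k0 - C)) (excess y M) <= C <=
    Num.max (excess y (y k0 - C)) (excess y M).
  by rewrite ge_min le_max excessM excess_low (ltW C_gt0) orbT.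
have [t _ yt] := IVT lowM (continuous_subspaceT (@continuous_excess y)) C_between.
by exists t.
Qed.

Hypothesis n_gt0 : (0 < n)%N.

Definition threshold y : R := xget 0 [set t | excess y t = C].

Lemma excess_threshold y : excess y (threshold y) = C.
Proof.
exact: (@xgetPex _ 0 [set t | excess y t = C] (excess_eq_exists y (Ordinal n_gt0))).
Qed.

Lemma threshold_unique y t : excess y t = C -> t = threshold y.
Proof.
move=> yt; have yth := excess_threshold y.
have [lt|gt|//] := ltgtP t (threshold y).
- by have := excess_decr (y := y) lt; rewrite yt yth ltxx => /(_ C_gt0).
- by have := excess_decr (y := y) gt; rewrite yt yth ltxx => /(_ C_gt0).
Qed.

Lemma threshold_ltP y t : threshold y < t <-> excess y t < C.
Proof.
split=> [lt|].
  have [excess_gt0|excess_le0] := ltP 0 (excess y t).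
    by rewrite -(excess_threshold y) excess_decr.
  exact: le_lt_trans excess_le0 C_gt0.
move=> lt; rewrite ltNge; apply/negP => /(excess_nonincr y).
by rewrite excess_threshold leNgt lt.
Qed.

Definition threshold_proj y k : R := Num.max (y k - threshold y) 0.

Lemma threshold_proj_ge0 y k : 0 <= threshold_proj y k.
Proof. by rewrite le_max lexx orbT. Qed.

Lemma threshold_proj_simplex y : simplex_pos C (threshold_proj y).
Proof. by split; [exact: excess_threshold | exact: threshold_proj_ge0]. Qed.

Lemma threshold_proj_le y k : threshold_proj y k <= C.
Proof.
rewrite -(excess_threshold y) /excess (bigD1 k) //= lerDl.
by apply: sumr_ge0 => m _; exact: threshold_proj_ge0.
Qed.

Lemma threshold_proj_variational y w : simplex_pos C w ->
  0 <= \sum_k (w k - threshold_proj y k) * (threshold_proj y k - y k).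
Proof.
case=> sum_w w_ge0; set v := threshold_proj y; set t := threshold y.
have sum_wv : \sum_k (w k - v k) = 0.
  by have [sum_v _] := threshold_proj_simplex y; rewrite sumrB sum_w sum_v subrr.
(* Shifting the second factor by [t] leaves the sum unchanged and makes every
   term nonnegative. *)
have -> : \sum_k (w k - v k) * (v k - y k) = \sum_k (w k - v k) * (v k - y k + t).
  under [RHS]eq_bigr do rewrite mulrDr.
  by rewrite big_split /= -mulr_suml sum_wv mul0r addr0.
apply: sumr_ge0 => k _; rewrite /v /threshold_proj -/t.
have [yt_le0|yt_gt0] := leP (y k - t) 0.
  by rewrite subr0 mulr_ge0 //; lra.
by rewrite (_ : y k - t - y k + t = 0) ?mulr0 //; ring.
Qed.

Lemma threshold_proj_pythagorean y w : simplex_pos C w ->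
  \sum_k (threshold_proj y k - y k) ^+ 2 + \sum_k (w k - threshold_proj y k) ^+ 2
    <= \sum_k (w k - y k) ^+ 2.
Proof.
move=> w_simplex; set v := threshold_proj y.
have -> : \sum_k (w k - y k) ^+ 2 = \sum_k (v k - y k) ^+ 2 + \sum_k (w k - v k) ^+ 2
    + 2 * \sum_k (w k - v k) * (v k - y k).
  by rewrite mulr_sumr -!big_split /=; apply: eq_bigr => k _; ring.
by rewrite lerDl mulr_ge0 // threshold_proj_variational.
Qed.

Lemma is_proj_threshold_proj y : is_proj C y (threshold_proj y).
Proof.
split=> [|w w_simplex]; first exact: threshold_proj_simplex.
rewrite /dist2 ler_wsqrtr // (le_trans _ (threshold_proj_pythagorean y w_simplex)) //.
by rewrite lerDl sumr_ge0 // => k _; exact: sqr_ge0.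
Qed.

Lemma proj_simplexE y : proj_simplex C y = threshold_proj y.
Proof.
have [u_simplex u_min] := xgetPex (fun=> 0) (ex_intro _ _ (is_proj_threshold_proj y)).
rewrite /proj_simplex; set u := xget _ _ in u_simplex u_min *.
have := u_min _ (threshold_proj_simplex y).
rewrite /dist2 ler_sqrt ?sumr_ge0 // => [u_le|k _]; last exact: sqr_ge0.
have := le_trans (threshold_proj_pythagorean y u_simplex) u_le.
rewrite gerDl => sum_le0.
apply/funext => k; apply/eqP; rewrite -subr_eq0 -sqrf_eq0; apply/eqP.
apply: (@psumr_eq0P _ _ xpredT (fun k => (u k - threshold_proj y k) ^+ 2)) => //.
  by move=> m _; exact: sqr_ge0.
by apply/eqP; rewrite eq_le sum_le0 sumr_ge0 // => m _; exact: sqr_ge0.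
Qed.

Lemma threshold_perm (s : {perm 'I_n}) y : threshold (y \o s) = threshold y.
Proof.
apply/esym/threshold_unique.
by rewrite -[RHS](excess_threshold y) /excess [RHS](reindex_inj (@perm_inj _ s)).
Qed.

Lemma threshold_proj_perm (s : {perm 'I_n}) y k :
  threshold_proj (y \o s) k = threshold_proj y (s k).
Proof. by rewrite /threshold_proj threshold_perm. Qed.

Lemma threshold_proj_monotone y y' dl i :
    (forall k, y' k - dl <= y k) -> y' i = y i + dl ->
  threshold_proj y i <= threshold_proj y' i.
Proof.
move=> y'_le y'_i.
have excess_shift : excess y' (threshold y + dl) <= C.
  rewrite -(excess_threshold y); apply: ler_sum => k _; rewrite le_max2 //.
  by have := y'_le k; lra.
have thr_le : threshold y' <= threshold y + dl.
  rewrite leNgt; apply/negP => /(excess_decr (y := y')).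
  by rewrite excess_threshold => /(_ C_gt0); rewrite ltNge excess_shift.
by rewrite /threshold_proj y'_i le_max2 //; lra.
Qed.

End simplex_projection.

Section measurable_threshold.
Variables (R : realType) (n : nat) (C : R) (d : measure_display) (X : measurableType d).
Hypotheses (C_gt0 : 0 < C) (n_gt0 : (0 < n)%N).
Variable u : 'I_n -> X -> R.
Hypothesis u_meas : forall k, measurable_fun setT (u k).

Lemma measurable_threshold : measurable_fun setT (fun w => threshold C (fun k => u k w)).
Proof.
apply: (measurability _ (RGenInftyO.measurableE R)) => //.
move=> _ [_ [t ->] <-]; rewrite setTI.
have -> : (fun w => threshold C (fun k => u k w)) @^-1` `]-oo, t[ =
    setT `&` (fun w => excess (fun k => u k w) t) @^-1` `]-oo, C[.
  apply/seteqP; split=> w /=; rewrite !in_itv /=.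
    by move/(threshold_ltP C_gt0 n_gt0).
  by case=> _ /(threshold_ltP C_gt0 n_gt0).
apply: measurable_sum => // k.
by apply: measurable_maxr => //; apply: measurable_funB.
Qed.

Lemma measurable_threshold_proj i :
  measurable_fun setT (fun w => threshold_proj C (fun k => u k w) i).
Proof.
apply: measurable_maxr => //; apply: measurable_funB => //; exact: measurable_threshold.
Qed.

End measurable_threshold.

Section product_sigma_algebra.
Variables (R : realType) (n : nat).

Definition rectangles : set (set ('I_n -> R)) :=
  [set B | exists2 A : 'I_n -> set R,
     (forall k, measurable (A k)) & B = [set y | forall k, A k (y k)]].

Definition vec := g_sigma_algebraType rectangles.

Lemma rectangles_setI : setI_closed rectangles.
Proof.
move=> _ _ [A mA ->] [B mB ->]; exists (fun k => A k `&` B k).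
  by move=> k; exact: measurableI.
apply/seteqP; split=> y /=; first by move=> [yA yB] k; split; [exact: yA|exact: yB].
by move=> yAB; split=> k; have [] := yAB k.
Qed.

Lemma rectanglesT : rectangles setT.
Proof. by exists (fun=> setT) => //; apply/seteqP; split. Qed.

Lemma measurable_coord k : measurable_fun setT (fun y : vec => y k).
Proof.
move=> _ B mB; apply: sub_sigma_algebra.
exists (fun m => if m == k then B else setT) => [m|]; first by case: ifP.
apply/seteqP; split=> y /= => [[_ yB] m|yB]; first by case: eqP => [->|].
by split=> //; have := yB k; rewrite eqxx.
Qed.

Definition random_vec d (T : measurableType d) (e : 'I_n -> T -> R) (w : T) : vec :=
  fun k => e k w.

Lemma measurable_random_vec d (T : measurableType d) (e : 'I_n -> T -> R) :
  (forall k, measurable_fun setT (e k)) -> measurable_fun setT (random_vec e).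
Proof.
move=> e_meas; apply: (measurability _ (erefl : @measurable _ vec = <<s rectangles >>)) => //.
move=> _ [_ [A mA ->] <-]; rewrite setTI.
have -> : random_vec e @^-1` [set y | forall k, A k (y k)] =
    \bigcap_(k in [set: 'I_n]) (e k @^-1` A k).
  by apply/seteqP; split=> w /= wA k => [_|]; exact: wA.
apply: fin_bigcap_measurable; first exact: finite_finset.
by move=> k _; rewrite -[X in measurable X]setTI; exact: e_meas.
Qed.

Lemma measure_vec_unique (m1 m2 : measure vec R) :
  (forall B, rectangles B -> m1 B = m2 B) -> (m1 setT < +oo)%E ->
  forall A, measurable A -> m1 A = m2 A.
Proof.
move=> m12 m1_fin A mA.
have cover : \bigcup_(k : nat) [set: vec] = [set: vec].
  by apply/seteqP; split=> // y _; exists 0%N.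
exact: (@measure_unique _ R vec rectangles (fun=> setT) erefl rectangles_setI
  (fun=> rectanglesT) cover m1 m2 m12 (fun=> m1_fin) A mA).
Qed.

End product_sigma_algebra.

Section exchangeable.
Local Open Scope ereal_scope.
Variables (R : realType) (n : nat) (d : measure_display) (T : measurableType d).
Variables (P : probability T R) (eta : 'I_n -> T -> R).
Hypotheses (eta_meas : forall k, measurable_fun setT (eta k))
  (eta_indep : mutually_independent P eta).
Variable s : {perm 'I_n}.
Hypothesis eta_s_law :
  forall k A, measurable A -> P (eta (s k) @^-1` A) = P (eta k @^-1` A).

Let eta_s_meas k : measurable_fun setT (eta (s k)). Proof. exact: eta_meas. Qed.
Let X := mfun_Sub (mem_set (measurable_random_vec eta_meas)).
Let Xs := mfun_Sub (mem_set (measurable_random_vec eta_s_meas)).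

Let prob_perm_rectangle (B : 'I_n -> set R) : (forall k, measurable (B k)) ->
  P (random_vec (fun k => eta (s k)) @^-1` [set y | forall k, B k (y k)]) =
  P (random_vec eta @^-1` [set y | forall k, B k (y k)]).
Proof.
move=> mB.
have -> : random_vec (fun k => eta (s k)) @^-1` [set y | forall k, B k (y k)] =
    \bigcap_(k in [set: 'I_n]) (eta k @^-1` B ((s^-1)%g k)).
  apply/seteqP; split=> w; rewrite /random_vec /= => wB k.
    by move=> _; have := wB ((s^-1)%g k); rewrite permKV.
  by have := wB (s k) I; rewrite permK.
have -> : random_vec eta @^-1` [set y | forall k, B k (y k)] =
    \bigcap_(k in [set: 'I_n]) (eta k @^-1` B k).
  by apply/seteqP; split=> w /= wB k => [_|]; exact: wB.
rewrite !eta_indep // (reindex_inj (@perm_inj _ s)) /=.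
by apply: eq_bigr => k _; rewrite permK eta_s_law.
Qed.

Let distribution_perm A : measurable A -> distribution P Xs A = distribution P X A.
Proof.
apply: measure_vec_unique => [_ [B mB ->]|]; first exact: prob_perm_rectangle.
by move: (probability_setT (distribution P Xs)) => /= ->; exact: ltry.
Qed.

Lemma ge0_integral_perm (F : vec R n -> \bar R) :
  measurable_fun setT F -> (forall z, 0 <= F z) ->
  \int[P]_w F (random_vec (fun k => eta (s k)) w) = \int[P]_w F (random_vec eta w).
Proof.
move=> F_meas F_ge0.
rewrite -[LHS](ge0_integral_distribution Xs) // -[RHS](ge0_integral_distribution X) //.
by apply: eq_measure_integral => A mA _; exact: distribution_perm.
Qed.

End exchangeable.

Section expected_projection.
Local Open Scope ereal_scope.
Variables (R : realType) (n : nat) (C : R) (d : measure_display) (T : measurableType d).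
Variables (P : probability T R) (eta : 'I_n -> T -> R).
Hypotheses (C_gt0 : (0 < C)%R) (n_gt0 : (0 < n)%N).
Hypotheses (eta_meas : forall k, measurable_fun setT (eta k))
  (eta_indep : mutually_independent P eta)
  (eta_ident : forall k m A, measurable A -> P (eta k @^-1` A) = P (eta m @^-1` A)).

Let measurable_noisy_proj (x : 'I_n -> R) k :
  measurable_fun setT (fun w => (threshold_proj C (fun m => x m + eta m w) k)%:E).
Proof.
apply/measurable_EFinP; apply: measurable_threshold_proj => // m.
exact: measurable_funD.
Qed.

Lemma expected_proj_simplex_fin_num (x : 'I_n -> R) k :
  \int[P]_w (proj_simplex C (fun m => x m + eta m w) k)%:E \is a fin_num.
Proof.
under eq_integral do rewrite proj_simplexE //.
rewrite ge0_fin_numE; last by apply: integral_ge0 => w _; rewrite lee_fin threshold_proj_ge0.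
rewrite (@le_lt_trans _ _ C%:E) ?ltry // (@le_trans _ _ (\int[P]_w C%:E)) //.
  apply: ge0_le_integral => //.
  - by move=> w _; rewrite lee_fin threshold_proj_ge0.
  - by move=> w _; rewrite lee_fin threshold_proj_le.
rewrite integral_cst // -[leRHS]mule1 lee_wpmul2l //; first by rewrite lee_fin ltW.
exact: probability_le1.
Qed.

Lemma expected_proj_simplex_le (x : 'I_n -> R) i j : (x i <= x j)%R ->
  \int[P]_w (proj_simplex C (fun m => x m + eta m w) i)%:E <=
  \int[P]_w (proj_simplex C (fun m => x m + eta m w) j)%:E.
Proof.
move=> x_ij; pose s := tperm i j.
under eq_integral do rewrite proj_simplexE //.
under [leRHS]eq_integral do rewrite proj_simplexE //.
pose F (z : vec R n) := (threshold_proj C (fun k => x (s k) + z k) i)%:E.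
have F_meas : measurable_fun setT F.
  apply/measurable_EFinP; apply: measurable_threshold_proj => // k.
  by apply: measurable_funD => //; exact: measurable_coord.
have -> : \int[P]_w (threshold_proj C (fun m => x m + eta m w) j)%:E =
    \int[P]_w F (random_vec (fun k => eta (s k)) w).
  by apply: eq_integral => w _; rewrite -{1}(tpermL i j) -threshold_proj_perm.
have eta_s_law k A : measurable A -> P (eta (s k) @^-1` A) = P (eta k @^-1` A).
  exact: eta_ident.
rewrite (ge0_integral_perm eta_meas eta_indep eta_s_law F_meas); last first.
  by move=> z; rewrite lee_fin threshold_proj_ge0.
apply: ge0_le_integral => //.
- by move=> w _; rewrite lee_fin threshold_proj_ge0.
- exact: (measurable_noisy_proj (fun k => x (s k)) i).
(* Coordinate [i] moves up by [x j - x i] and no coordinate moves up by more. *)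
- move=> w _; rewrite lee_fin.
  apply: (threshold_proj_monotone C_gt0 n_gt0 (dl := x j - x i)); rewrite /s /random_vec.
    by move=> k; case: tpermP => [->|->|_ _]; lra.
  by rewrite tpermL; lra.
Qed.

End expected_projection.

Theorem lemma4 (R : realType) (n : nat) (hn : (2 <= n)%N) (C : R) (hC : 0 < C)
  (x : 'I_n -> R) (hx : simplex_pos C x)
  (d : measure_display) (T : measurableType d) (P : probability T R)
  (eta : 'I_n -> T -> R)
  (eta_meas : forall i, measurable_fun [set: T] (eta i))
  (eta_indep : mutually_independent P eta)
  (eta_law : (exists2 b : R, 0 < b &
                 forall i (A : set R), measurable A -> P (eta i @^-1` A) = laplace_prob b A)
          \/ (exists2 sigma : R, 0 < sigma &
                 forall i (A : set R), measurable A -> P (eta i @^-1` A) = normal_prob 0 sigma A)) :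
  forall i j : 'I_n, x i <= x j ->
    (bias_proj P C x eta i - bias_proj P C x eta j <= (x j - x i)%:E)%E.
Proof.
move=> i j x_ij; have n_gt0 : (0 < n)%N by apply: leq_trans hn.
have eta_ident k m A : measurable A -> P (eta k @^-1` A) = P (eta m @^-1` A).
  by case: eta_law => [[b _ law]|[sigma _ law]] mA; rewrite !law.
have Ei_le_Ej := expected_proj_simplex_le hC n_gt0 eta_meas eta_indep eta_ident x_ij.
have Ei_fin := expected_proj_simplex_fin_num P hC n_gt0 eta_meas x i.
have Ej_fin := expected_proj_simplex_fin_num P hC n_gt0 eta_meas x j.
move: Ei_le_Ej; rewrite /bias_proj -(fineK Ei_fin) -(fineK Ej_fin) -!EFinB !lee_fin.
lra.
Qed.
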